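(* Consider a flow that traverses two systems in sequence, where system $i$ ($i=1,2$) shares a constant service rate $c_i>0$ (bits per unit time) among flows by non-preemptive strict priority scheduling (FIFO queues, infinite buffers, initially empty), and the flow is given the highest priority at both systems. Let $l^M$ be the maximum packet length of the flow and $l^{M_l}$ the maximum packet length of all lower-priority queues. Then the concatenated system offers the flow the service curve $\beta(t)=\min\{c_1,c_2\}\left(t-\frac{l^M+l^{M_l}}{c_1}-\frac{l^M+l^{M_l}}{c_2}\right)^{+}$, i.e. for all $t\ge0$, $A^{*}(t)\ge\inf_{0\le s\le t}\{A(s)+\beta(t-s)\}$, where $A$ is the flow's input to the first system and $A^{*}$ its output from the second system.
   Context: $(x)^{+}=\max\{x,0\}$. Non-preemptive strict priority: whenever the link is free and some queue is nonempty, it starts transmitting the head packet of the highest-priority nonempty queue; a transmission is never interrupted. By convention, a packet is said to have arrived at (respectively, been served by) a system when and only when its last bit has arrived (respectively, departed). $A(t)$ is the cumulative amount of the flow's traffic (sum of packet lengths) entering the first system in $[0,t)$ and $A^{*}(t)$ the cumulative amount leaving the second system in $[0,t)$, with $A(0)=A^{*}(0)=0$. A function $\beta$ (nonnegative, nondecreasing, $\beta(0)=0$) is a service curve if $A^{*}(t)\ge\inf_{0\le s\le t}\{A(s)+\beta(t-s)\}$ for all $t\ge0$. *)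

From HB Require Import structures.
From mathcomp Require Import all_boot all_order all_algebra.
From mathcomp Require Import mathcomp_extra boolp classical_sets functions
  cardinality fsbigop reals.

Set Implicit Arguments.
Unset Strict Implicit.
Unset Printing Implicit Defensive.

Import Order.TTheory GRing.Theory Num.Theory.
Local Open Scope classical_set_scope.
Local Open Scope ring_scope.

Definition sumf (A B C : Type) (g : A -> C) (h : B -> C) (x : A + B) : C :=
  match x with inl a => g a | inr b => h b end.

(* Priority class at a server: the flow of interest is alone in the highest
   priority queue (class 0); a cross-traffic packet of (lower-priority) class k
   is put in queue k.+1.  Smaller class = higher priority. *)
Definition prio_cls (F O : Type) (cl : O -> nat) : F + O -> nat :=
  sumf (fun _ : F => 0%N) (fun o => (cl o).+1).

Section Server.
Variables (R : realType) (P : Type).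
(* Each packet p has class cls p, length len p,
   arrival time arr p (time at which its LAST bit has arrived).
   [sv p] : p is eventually transmitted; then its transmission occupies the
   link on [st p, st p + len p / c); its departure (last bit) is st p + len p / c.
   A packet p with ~ sv p stays in its queue forever. *)
Variables (c : R) (cls : P -> nat) (len arr : P -> R) (sv : P -> Prop) (st : P -> R).

Definition transmitting (p : P) (tau : R) : Prop :=
  sv p /\ st p <= tau < st p + len p / c.

Definition busy (tau : R) : Prop := exists p, transmitting p tau.

Definition waiting (p : P) (tau : R) : Prop :=
  arr p <= tau /\ (sv p -> tau < st p).

Definition np_prio_run : Prop :=
  (forall p, 0 < len p) /\
  (* initially empty: nothing arrives before time 0 *)
  (forall p, 0 <= arr p) /\
  (forall p, sv p -> arr p <= st p) /\
  (* one transmission at a time, never interrupted *)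
  (forall p p', p <> p' -> sv p -> sv p' ->
      st p + len p / c <= st p' \/ st p' + len p' / c <= st p) /\
  (forall p tau, waiting p tau -> busy tau) /\
  (forall p p', sv p' -> (cls p < cls p')%N -> ~ waiting p (st p')) /\
  (forall p p', cls p = cls p' -> arr p < arr p' -> sv p' ->
      sv p /\ st p < st p').
End Server.

(* Cumulative amount (sum of lengths) of the packets of S whose event time
   tm f lies in [0, t)  (all event times are >= 0 in our runs). *)
Definition cumul (R : realType) (F : choiceType) (len tm : F -> R)
    (S : set F) (t : R) : R :=
  \sum_(f \in S `&` [set f | tm f < t]) len f.

Definition beta_c4 (R : realType) (c1 c2 lM lMl : R) (t : R) : R :=
  Num.min c1 c2 * Num.max (t - (lM + lMl) / c1 - (lM + lMl) / c2) 0.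

(* Fix t at one server of rate c.  If some flow packet has arrived but not left
   by t, let g be the first one to start.  Walking back through the flow
   packets sent back to back before g reaches a packet h that started within
   lMl/c of its arrival: while h waited, all earlier flow packets had left, and
   only a lower-priority packet already in transmission could hold the link.
   From the start of h to the start of g the link sends flow traffic at rate c,
   everything that arrived before h (FIFO) left earlier, and g leaves at most
   lM/c after its start, so A(arr h) + c (t - arr h - (lM + lMl)/c) <= A*(t).
   Thus each server offers c (. - (lM + lMl)/c)^+ with the infimum attained,
   and two such curves compose into the stated one because
   min(c1,c2) (u + v - T1 - T2)^+ <= c1 (u - T1)^+ + c2 (v - T2)^+. *)

From HB Require Import structures.
From mathcomp Require Import all_boot all_order all_algebra.
From mathcomp Require Import mathcomp_extra boolp classical_sets functions
  cardinality fsbigop reals.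
From mathcomp Require Import finmap ring lra.

Set Implicit Arguments.
Unset Strict Implicit.
Unset Printing Implicit Defensive.

Import Order.TTheory GRing.Theory Num.Theory.
Local Open Scope classical_set_scope.
Local Open Scope ring_scope.

Lemma ler_fsum_subset (R : numDomainType) (I : choiceType) (A B : set I)
    (F : I -> R) :
  finite_set B -> A `<=` B -> (forall i, B i -> 0 <= F i) ->
  \sum_(i \in A) F i <= \sum_(i \in B) F i.
Proof.
move=> finB AB F0; rewrite [leRHS](fsbigID A) // (setIidr AB) lerDl.
by apply: fsumr_ge0 => i [/F0].
Qed.

Section FiniteOrderedSets.
Context (T : choiceType) (d : Order.disp_t) (R : orderType d).
Implicit Types (A : set T) (g : T -> R).

Lemma finite_set_argmax A g : finite_set A -> A !=set0 ->
  exists2 x, A x & forall y, A y -> (g y <= g x)%O.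
Proof.
move=> /finite_fsetP[B ->] [x0 Bx0].
case: (@arg_maxP _ _ B [` Bx0]%fset predT (fun i => g (val i))) => // i _ imax.
by exists (val i) => [|y By]; [exact: valP | exact: (imax [` By]%fset)].
Qed.

Lemma finite_below_wf g : (forall x, finite_set [set y | (g y < g x)%O]) ->
  well_founded (fun y x => (g y < g x)%O).
Proof.
move=> finb x; have [n] := ubnP #|` fset_set [set y | (g y < g x)%O]|.
elim: n x => [|n IH] x; first by rewrite ltn0.
rewrite ltnS => lex; constructor => y yx; apply: IH; apply: leq_trans lex.
apply: fproper_ltn_card; rewrite fproperEneq; apply/andP; split.
  apply/negP => /eqP eq_below.
  have : y \in fset_set [set z | (g z < g x)%O] by rewrite in_fset_set ?mem_set.
  by rewrite -eq_below in_fset_set // => /set_mem /=; rewrite ltxx.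
by rewrite -fset_set_sub // => z /= zy; apply: lt_trans yx.
Qed.

Lemma fsum_lt_last (V : nmodType) g (F : T -> V) j (b : R) :
  injective g -> finite_set [set k | (g k < b)%O] -> (g j < b)%O ->
  (forall k, (g k < b)%O -> (g k <= g j)%O) ->
  \sum_(k \in [set k | (g k < b)%O]) F k =
  \sum_(k \in [set k | (g k < g j)%O]) F k + F j.
Proof.
move=> ginj finb jb jmax.
have -> : [set k | (g k < b)%O] = [set k | (g k < g j)%O] `|` [set j].
  apply/seteqP; split => k /=.
    by move=> /jmax; rewrite le_eqVlt => /orP[/eqP/ginj|]; [right|left].
  by case=> [kj|->]; [exact: lt_trans jb|].
rewrite fsbigU0 ?fsbig_set1 //; last by move=> k [/= + kj]; rewrite kj ltxx.
by apply: sub_finite_set finb => k /= /lt_trans; apply.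
Qed.

End FiniteOrderedSets.

Lemma finite_set_argmin (T : choiceType) (d : Order.disp_t) (R : orderType d)
    (A : set T) (g : T -> R) : finite_set A -> A !=set0 ->
  exists2 x, A x & forall y, A y -> (g x <= g y)%O.
Proof.
move=> finA A0; have [x Ax xmin] := @finite_set_argmax T _ R^d A g finA A0.
by exists x.
Qed.

Definition rate_latency (R : realType) (c T x : R) : R := c * Num.max (x - T) 0.

Definition attained_service_curve (R : realType) (beta A D : R -> R) : Prop :=
  forall t, 0 <= t -> exists2 s, 0 <= s <= t & A s + beta (t - s) <= D t.

Lemma rate_latency_ge0 (R : realType) (c T x : R) :
  0 <= c -> 0 <= rate_latency c T x.
Proof. by move=> c_ge0; apply: mulr_ge0 => //; rewrite le_max lexx orbT. Qed.

Lemma rate_latency_concat (R : realType) (c1 c2 T1 T2 u v : R) :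
  0 <= c1 -> 0 <= c2 ->
  rate_latency (Num.min c1 c2) (T1 + T2) (u + v) <=
  rate_latency c1 T1 u + rate_latency c2 T2 v.
Proof.
move=> c1_ge0 c2_ge0; rewrite /rate_latency.
set a := Num.max (u - T1) 0; set b := Num.max (v - T2) 0.
have [ua a_ge0] : u - T1 <= a /\ 0 <= a by rewrite !le_max !lexx orbT.
have [vb b_ge0] : v - T2 <= b /\ 0 <= b by rewrite !le_max !lexx orbT.
apply: (@le_trans _ _ (Num.min c1 c2 * (a + b))).
  by rewrite ler_wpM2l ?le_min ?c1_ge0 // ge_max addr_ge0 // andbT; lra.
by rewrite mulrDr lerD // ler_wpM2r // ge_min lexx ?orbT.
Qed.

Lemma attained_service_curve_comp (R : realType)
    (beta1 beta2 beta A B D : R -> R) :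
  (forall u v, 0 <= u -> 0 <= v -> beta (u + v) <= beta1 u + beta2 v) ->
  attained_service_curve beta1 A B -> attained_service_curve beta2 B D ->
  attained_service_curve beta A D.
Proof.
move=> beta_le AB BD t t_ge0.
have [s' /andP[s'_ge0 s't] BD_t] := BD t t_ge0.
have [s /andP[s_ge0 ss'] AB_s'] := AB s' s'_ge0.
exists s; first by rewrite s_ge0 (le_trans ss').
have := beta_le (s' - s) (t - s'); rewrite !subr_ge0 => /(_ ss' s't).
by rewrite addrC addrA subrK; lra.
Qed.

Lemma beta_c4E (R : realType) (c1 c2 lM lMl : R) : beta_c4 c1 c2 lM lMl =
  rate_latency (Num.min c1 c2) ((lM + lMl) / c1 + (lM + lMl) / c2).
Proof. by apply/funext => x; rewrite /beta_c4 /rate_latency opprD addrA. Qed.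

Section NonPreemptivePriorityServer.
Variables (R : realType) (F O : choiceType) (c lM lMl : R).
Variables (lenF arrF : F -> R) (cl : O -> nat) (lenO arrO : O -> R).
Variables (sv : F + O -> Prop) (st : F + O -> R).
Hypotheses (c_gt0 : 0 < c) (lM_ge0 : 0 <= lM) (lMl_ge0 : 0 <= lMl).
Hypotheses (lenF_le : forall f, lenF f <= lM) (lenO_le : forall o, lenO o <= lMl).
Hypothesis arrF_fin : forall t, finite_set [set f | arrF f < t].
Hypothesis run :
  np_prio_run c (prio_cls cl) (sumf lenF lenO) (sumf arrF arrO) sv st.

Local Notation len := (sumf lenF lenO).
Local Notation arr := (sumf arrF arrO).
Local Notation stF f := (st (inl f)).
Local Notation depF f := (st (inl f) + lenF f / c).
Local Notation transmits := (transmitting c len sv st).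
Local Notation waits := (waiting arr sv st).

Lemma len_gt0 p : 0 < len p.
Proof. by case: run. Qed.

Lemma arr_ge0 p : 0 <= arr p.
Proof. by case: run => _ [/(_ p)]. Qed.

Lemma arr_le_start p : sv p -> arr p <= st p.
Proof. by move=> svp; case: run => _ [_ [/(_ p svp)]]. Qed.

Lemma overlapping_transmissions_eq p q : sv p -> sv q ->
  st p < st q + len q / c -> st q < st p + len p / c -> p = q.
Proof.
move=> svp svq pq qp; apply: contrapT => neq_pq.
by case: run => _ [_ [_ [/(_ p q neq_pq svp svq) [] + _]]]; lra.
Qed.

Lemma waiting_busy p tau : waits p tau -> exists q, transmits q tau.
Proof. by case: run => _ [_ [_ [_ [/(_ p tau) + _]]]]. Qed.

Lemma cross_start_not_waiting g o : sv (inr o) -> ~ waits (inl g) (st (inr o)).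
Proof.
by move=> svo; case: run => _ [_ [_ [_ [_ [prio _]]]]]; apply: prio.
Qed.

Lemma flow_fifo f g :
  arrF f < arrF g -> sv (inl g) -> sv (inl f) /\ stF f < stF g.
Proof. by case: run => _ [_ [_ [_ [_ [_ /(_ (inl f) (inl g) erefl)]]]]]. Qed.

Lemma flow_tx_gt0 f : 0 < lenF f / c.
Proof. by rewrite divr_gt0 // (len_gt0 (inl f)). Qed.

Lemma cross_transmitting_start_lt g o tau :
  waits (inl g) tau -> transmits (inr o) tau -> st (inr o) < arrF g.
Proof.
move=> [ag wg] [svo /andP[so _]]; rewrite ltNge; apply/negP => go.
by apply: (cross_start_not_waiting svo); split => [//|/wg/(le_lt_trans so)].
Qed.

(* Otherwise the link is busy forever after arrF f; but a lower-priority packet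
   cannot start while f waits, and by FIFO only the finitely many flow packets
   that arrived before f can, so two transmissions would eventually overlap. *)
Lemma flow_served f : sv (inl f).
Proof.
apply: contrapT => nsv.
have wait tau : arrF f <= tau -> waits (inl f) tau by split => // /nsv.
have f_lt : arrF f < arrF f + 1 by rewrite ltrDl ltr01.
have served_arr k : sv (inl k) -> arrF k < arrF f + 1.
  move=> svk; rewrite ltNge; apply/negP => fk.
  by have [/nsv] := flow_fifo (lt_le_trans f_lt fk) svk.
have [m _ m_max] := finite_set_argmax (fun k => depF k) (arrF_fin (arrF f + 1))
  (ex_intro _ f f_lt).
pose t1 := Num.max (depF m) (arrF f).
have [m_t1 f_t1] : depF m <= t1 /\ arrF f <= t1 by rewrite !le_max !lexx orbT.
have late_start p tau : transmits p tau -> t1 <= tau -> st p < arrF f.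
  case: p => [k|o] tx t1_tau.
    by have := m_max k (served_arr k tx.1); case: tx => _ /andP /=; lra.
  by apply: cross_transmitting_start_lt tx; apply: wait; lra.
have [p1 tx1] := waiting_busy (wait t1 f_t1).
have s1 := late_start p1 t1 tx1 (lexx _).
have [p2 tx2] : exists q, transmits q (st p1 + len p1 / c).
  by apply: waiting_busy (wait _ _); case: tx1 => _ /andP; lra.
case: (tx1) (tx2) => [sv1 /andP[_ b1]] [sv2 /andP[a2 b2]].
have s2 := late_start p2 _ tx2 (ltW b1).
have e12 : p1 = p2 by apply: overlapping_transmissions_eq => //; lra.
by move: b2; rewrite e12 ltxx.
Qed.

Lemma flow_start_inj : injective (fun f => stF f).
Proof.
move=> f g /= e; have := flow_tx_gt0 f; have := flow_tx_gt0 g => g_gt0 f_gt0.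
suff [] : inl f = inl g :> F + O by [].
apply: (overlapping_transmissions_eq (flow_served f) (flow_served g)) => /=;
  by rewrite e; lra.
Qed.

Lemma flow_dep_le_start k g : stF k < stF g -> depF k <= stF g.
Proof.
move=> kg; rewrite leNgt; apply/negP => gk; have := flow_tx_gt0 g => g_gt0.
have [e] : inl k = inl g :> F + O.
  by apply: (overlapping_transmissions_eq (flow_served k) (flow_served g)) => /=;
     lra.
by move: kg; rewrite e ltxx.
Qed.

Lemma finite_flow_start_lt b : finite_set [set f | stF f < b].
Proof.
apply: sub_finite_set (arrF_fin b) => f /=.
exact/le_lt_trans/(arr_le_start (flow_served f)).
Qed.

Lemma finite_flow_dep_lt b : finite_set [set f | depF f < b].
Proof.
apply: sub_finite_set (finite_flow_start_lt b) => f /=.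
by apply: le_lt_trans; rewrite lerDl ltW ?flow_tx_gt0.
Qed.

Lemma flow_start_le_arr g : (forall k, stF k < stF g -> depF k < arrF g) ->
  stF g <= arrF g + lMl / c.
Proof.
move=> early_dep; rewrite leNgt; apply/negP => late.
have lMl_c : 0 <= lMl / c by rewrite divr_ge0 // ltW.
have wait_g : waits (inl g) (arrF g + lMl / c) by split => //=; rewrite lerDl.
have [[k|o] tx] := waiting_busy wait_g; case: (tx) => _ /andP[a b].
  by have := early_dep k (le_lt_trans a late); move: b => /=; lra.
have := cross_transmitting_start_lt wait_g tx.
have : lenO o / c <= lMl / c by rewrite ler_pM2r ?invr_gt0.
by move: b => /=; lra.
Qed.

Lemma flow_start_after_last g j : stF j < stF g ->
  (forall k, stF k < stF g -> stF k <= stF j) -> arrF g <= depF j ->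
  stF g = depF j.
Proof.
move=> jg j_last g_dep; apply/eqP; rewrite eq_le flow_dep_le_start // andbT.
rewrite leNgt; apply/negP => early.
have wait_g : waits (inl g) (depF j) by [].
have [q tx] := waiting_busy wait_g; case: (tx) => svq /andP[a b].
have q_early : st q < depF j.
  case: q tx svq a b => [k|o] tx _ a b; last first.
    exact: lt_le_trans (cross_transmitting_start_lt wait_g tx) g_dep.
  have := j_last k (le_lt_trans a early); have := flow_tx_gt0 j; lra.
have ej : q = inl j.
  by apply: (overlapping_transmissions_eq svq (flow_served j)) => //=;
     have := flow_tx_gt0 j; lra.
by move: b; rewrite ej ltxx.
Qed.

Lemma flow_busy_period g : exists h, [/\ stF h <= stF g, stF h <= arrF h + lMl / c
  & \sum_(k \in [set k | stF k < stF g]) lenF k =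
    \sum_(k \in [set k | stF k < stF h]) lenF k + c * (stF g - stF h)].
Proof.
have start_wf := finite_below_wf (fun f => finite_flow_start_lt (stF f)).
elim/(well_founded_ind start_wf): g => g IH.
have [early_dep|] := pselect (forall k, stF k < stF g -> depF k < arrF g).
  by exists g; rewrite lexx flow_start_le_arr // subrr mulr0 addr0.
move=> /existsNP[k /not_implyP[kg /negP]]; rewrite -leNgt => g_dep.
have [j /= jg j_last] := finite_set_argmax (fun f => stF f)
  (finite_flow_start_lt (stF g)) (ex_intro _ k kg).
have g_depj : arrF g <= depF j.
  move: (j_last k kg); rewrite le_eqVlt => /orP[/eqP/flow_start_inj <- //|].
  by move=> /flow_dep_le_start; have := flow_tx_gt0 j; lra.
have [h [hj h_arr sum_j]] := IH j jg.
exists h; split; [exact: le_trans hj (ltW jg) | by [] |].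
rewrite (fsum_lt_last lenF flow_start_inj (finite_flow_start_lt _) jg j_last).
rewrite sum_j (flow_start_after_last jg j_last g_depj) -addrA; congr (_ + _).
by field; rewrite gt_eqF.
Qed.

Lemma first_late_flow t : (exists g, arrF g < t <= depF g) ->
  exists g, [/\ arrF g < t, t <= depF g & forall k, stF k < stF g -> depF k < t].
Proof.
move=> late.
have fin_late : finite_set [set g | arrF g < t <= depF g].
  by apply: sub_finite_set (arrF_fin t) => f /andP[].
have [g /andP[g_arr g_dep] g_first] :=
  finite_set_argmin (fun f => stF f) fin_late late.
exists g; split => // k kg; rewrite ltNge; apply/negP => k_dep.
have [k_arr|t_arr] := ltP (arrF k) t.
  by have := g_first k; rewrite /= k_arr k_dep leNgt kg => /(_ isT).
have [_] := flow_fifo (lt_le_trans g_arr t_arr) (flow_served k).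
by rewrite ltNge (ltW kg).
Qed.

Lemma np_prio_attained_service :
  attained_service_curve (rate_latency c ((lM + lMl) / c))
    (cumul lenF arrF setT) (cumul lenF (fun f => depF f) setT).
Proof.
move=> t t_ge0; have lenF_ge0 k : 0 <= lenF k by exact/ltW/(len_gt0 (inl k)).
rewrite /cumul /rate_latency.
have [/first_late_flow[g [g_arr g_dep g_first]]|no_late] :=
  pselect (exists g, arrF g < t <= depF g); last first.
  exists t; first by rewrite t_ge0 lexx.
  rewrite subrr sub0r (max_idPr _) ?mulr0 ?addr0; last first.
    by rewrite oppr_le0 divr_ge0 ?addr_ge0 // ltW.
  apply: ler_fsum_subset => [|k [_ /= k_arr]|k _ //].
    exact/finite_setIr/finite_flow_dep_lt.
  split => //; rewrite /= ltNge; apply/negP => k_dep; apply: no_late.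
  by exists k; rewrite k_arr.
have [h [hg h_arr sum_g]] := flow_busy_period g.
have h_early : arrF h < t.
  move: hg; rewrite le_eqVlt => /orP[/eqP/flow_start_inj -> //|/g_first].
  by have := arr_le_start (flow_served h); have := flow_tx_gt0 h => /=; lra.
exists (arrF h); first by rewrite (arr_ge0 (inl h)) ltW.
have arr_sum : \sum_(k \in setT `&` [set k | arrF k < arrF h]) lenF k <=
    \sum_(k \in [set k | stF k < stF h]) lenF k.
  apply: ler_fsum_subset => [|k [_ /= k_arr]|k _ //].
    exact: finite_flow_start_lt.
  exact: (flow_fifo k_arr (flow_served h)).2.
have dep_sum : \sum_(k \in [set k | stF k < stF g]) lenF k <=
    \sum_(k \in setT `&` [set k | depF k < t]) lenF k.
  apply: ler_fsum_subset => [|k /= /g_first //|k _ //].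
  exact/finite_setIr/finite_flow_dep_lt.
have latency : c * Num.max (t - arrF h - (lM + lMl) / c) 0 <= c * (stF g - stF h).
  rewrite ler_pM2l // ge_max subr_ge0 hg andbT.
  have : lenF g / c <= lM / c by rewrite ler_pM2r ?invr_gt0.
  by move: g_dep h_arr; rewrite mulrDl; lra.
by move: sum_g; lra.
Qed.


End NonPreemptivePriorityServer.

Theorem corollary4 (R : realType) (F O1 O2 : choiceType)
  (c1 c2 lM lMl : R)
  (lenF arrF : F -> R)
  (cl1 : O1 -> nat) (len1 arr1 : O1 -> R)
  (cl2 : O2 -> nat) (len2 arr2 : O2 -> R)
  (sv1 : F + O1 -> Prop) (st1 : F + O1 -> R)
  (sv2 : F + O2 -> Prop) (st2 : F + O2 -> R) :
  0 < c1 -> 0 < c2 -> 0 <= lM -> 0 <= lMl ->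
  (forall f, lenF f <= lM) ->
  (forall o, len1 o <= lMl) -> (forall o, len2 o <= lMl) ->
  (forall t, finite_set [set f | arrF f < t]) ->
  np_prio_run c1 (@prio_cls F _ cl1) (sumf lenF len1) (sumf arrF arr1) sv1 st1 ->
  np_prio_run c2 (@prio_cls F _ cl2) (sumf lenF len2)
    (sumf (fun f => st1 (inl f) + lenF f / c1) arr2) sv2 st2 ->
  forall t, 0 <= t ->
    inf [set cumul lenF arrF setT s + beta_c4 c1 c2 lM lMl (t - s)
        | s in [set s | 0 <= s <= t]]
    <= cumul lenF (fun f => st2 (inl f) + lenF f / c2) [set f | sv2 (inl f)] t.
Proof.
move=> c1_gt0 c2_gt0 lM_ge0 lMl_ge0 lenF_le len1_le len2_le arrF_fin run1 run2.
move=> t t_ge0.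
have dep1_fin := finite_flow_dep_lt c1_gt0 arrF_fin run1.
have served2 : [set f | sv2 (inl f)] = setT.
  by apply/seteqP; split => // f _; exact: flow_served dep1_fin run2 f.
have [s s_t le_s] := attained_service_curve_comp
  (fun u v _ _ => rate_latency_concat _ _ u v (ltW c1_gt0) (ltW c2_gt0))
  (np_prio_attained_service c1_gt0 lM_ge0 lMl_ge0 lenF_le len1_le arrF_fin run1)
  (np_prio_attained_service c2_gt0 lM_ge0 lMl_ge0 lenF_le len2_le dep1_fin run2)
  t_ge0.
rewrite served2 beta_c4E; apply: le_trans le_s; apply: ge_inf; last by exists s.
exists 0 => _ [u _ <-]; apply: addr_ge0.
  by apply: fsumr_ge0 => f _; exact/ltW/(len_gt0 run1 (inl f)).
by apply: rate_latency_ge0; rewrite le_min !ltW.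
Qed.
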